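(* Consider the single-input single-output discrete-time closed-loop setting described in the context, and fix a DFT frequency $\omega_\ell = 2\pi\ell/N$ at which $S(e^{j\omega_\ell})R(e^{j\omega_\ell}) \neq 0$. Let $Z_{\mathrm{dir}} := \frac{1}{SR}\big(\bar V_y - G\bar V_u\big)$ and $Z_{\mathrm{io}} := \frac{1}{SR}\big(\bar V_y^{(1)} - G\bar V_u^{(2)}\big)$ be the limits in distribution, as $\sigma\to 0$, of $\sigma^{-1}(\widehat G_{\mathrm{dir}}-G)$ and $\sigma^{-1}(\widehat{\widehat G}_{\mathrm{io}}-G)$ respectively. Let $\bar\sigma_{yu} := \mathbb{E}[\bar V_y \bar V_u^{\ast}]$. If $\Re\big[G^{\ast}(e^{j\omega_\ell})\,\bar\sigma_{yu}\big] < 0$, then \[ \mathbb{E}\big[|Z_{\mathrm{io}}|^2\big] < \mathbb{E}\big[|Z_{\mathrm{dir}}|^2\big], \] i.e., the asymptotic variance (as $\sigma\to0$) of $\widehat{\widehat G}_{\mathrm{io}}$ is strictly smaller than that of $\widehat G_{\mathrm{dir}}$ at $\omega_\ell$.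
   Context: Setting: unit sample time, $\mathrm{q}$ the forward shift operator. Plant $G(\mathrm{q})$ and controller $C(\mathrm{q})$ are linear time-invariant and the closed loop is stable; the sensitivity is $S = 1/(1+GC)$. Noise $v(k) = H(\mathrm{q})e(k)$ with $H$ a stable spectral factor and $e(k)=\sigma\bar e(k)$, where $\bar e$ is a zero-mean unit-variance white process whose distribution does not depend on $\sigma>0$. Reference $r(k)=r_2(k)+C(\mathrm{q})r_1(k)$ with $r_1,r_2$ known, $r$ periodic with period $N$. Plant output and input: $y = S G r + S v$, $u = S r - S C v$. Data $\{(r_k,u_k,y_k)\}_{k=0}^{N-1}$ consist of one period collected in steady state, synchronized with $r$. The DFT of a record $x_0,\dots,x_{N-1}$ is $X(e^{j\omega_\ell}) = N^{-1/2}\sum_{k=0}^{N-1}x_k e^{-j\omega_\ell k}$, $\omega_\ell = 2\pi\ell/N$. At the fixed frequency, $G,S,C,H$ denote the values of the transfer functions at $e^{j\omega_\ell}$, and $R,U,Y$ the DFTs of $r,u,y$. The noise contributions $V_y, V_u$ are defined by $Y = SGR + V_y$, $U = SR + V_u$; they are proportional to $\sigma$, and $\bar V_y := V_y/\sigma$, $\bar V_u := V_u/\sigma$ are zero-mean complex random variables with finite variances whose distributions do not depend on $\sigma$. Direct estimator: $\widehat G_{\mathrm{dir}} := Y/U$. Two-experiment joint input-output estimator: a second, independent experiment with the same excitation $r$ (same deterministic parts, independent noise) is performed; $Y^{(1)}$ is the output DFT from experiment 1 and $U^{(2)}$ the input DFT from experiment 2, with normalized noise contributions $\bar V_y^{(1)}$,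 $\bar V_u^{(2)}$ (independent of each other, distributed as $\bar V_y$, $\bar V_u$ respectively); $\widehat{\widehat G}_{\mathrm{io}} := \dfrac{Y^{(1)}/R}{U^{(2)}/R}$. The asymptotic variance of an estimator is $\mathbb{E}|Z|^2$ of its limiting distribution $Z$ of $\sigma^{-1}(\widehat G - G)$ as $\sigma\to0$. *)

From HB Require Import structures.
From mathcomp Require Import all_boot all_order all_algebra complex.
From mathcomp Require Import all_classical all_reals all_analysis.
Set Implicit Arguments. Unset Strict Implicit. Unset Printing Implicit Defensive.
Import Order.TTheory GRing.Theory Num.Theory.

Local Open Scope classical_set_scope.
Local Open Scope ring_scope.

Section complex_rv.
Context {R : realType} {d : measure_display} {T : measurableType d}.
Variable P : probability T R.

Definition cre (X : T -> R[i]) : T -> R := fun t => complex.Re (X t).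
Definition cim (X : T -> R[i]) : T -> R := fun t => complex.Im (X t).

Definition cpair (X : T -> R[i]) : T -> R * R := fun t => (cre X t, cim X t).

Definition finite_var (X : T -> R[i]) : Prop :=
  cre X \in Lfun P 2%E /\ cim X \in Lfun P 2%E.

Definition zero_mean (X : T -> R[i]) : Prop :=
  ('E_P[cre X] = 0 /\ 'E_P[cim X] = 0)%E.

Definition cexpect (X : T -> R[i]) : R[i] :=
  ((fine 'E_P[cre X]%E) +i* (fine 'E_P[cim X]%E))%C.

Definition second_moment (X : T -> R[i]) : \bar R :=
  ('E_P[fun t => (complex.Re (X t) ^+ 2 + complex.Im (X t) ^+ 2)%R])%E.

Definition same_distribution (X Y : T -> R[i]) : Prop :=
  forall A : set (R * R), measurable A ->
    P (cpair X @^-1` A) = P (cpair Y @^-1` A).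

Definition cindependent (X Y : T -> R[i]) : Prop :=
  forall A B : set (R * R), measurable A -> measurable B ->
    P (cpair X @^-1` A `&` cpair Y @^-1` B) =
    (P (cpair X @^-1` A) * P (cpair Y @^-1` B))%E.

End complex_rv.

Definition Zlim {R : realType} {T : Type} (G S Rr : R[i]) (Vy Vu : T -> R[i])
  : T -> R[i] := fun t => (Vy t - G * Vu t) / (S * Rr).

From HB Require Import structures.
From mathcomp Require Import all_boot all_order all_algebra complex.
From mathcomp Require Import all_classical all_reals all_analysis measurable_realfun.
From mathcomp Require Import ring lra.
Set Implicit Arguments. Unset Strict Implicit. Unset Printing Implicit Defensive.
Import Order.TTheory GRing.Theory Num.Theory.
Local Open Scope ring_scope.
Local Open Scope classical_set_scope.

(** Expanding [|(z - G y) / (S R)|^2] gives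
    [E|Z|^2 = |S R|^-2 (E|Vy|^2 + |G|^2 E|Vu|^2 - 2 Re (G^* E[Vy Vu^*]))]
    for both estimators.  The two-experiment pair has the same marginal laws,
    so the first two terms agree, while independence of [Vy1] and the centred
    [Vu2] kills the cross term [E[Vy1 Vu2^*] = E[Vy1] E[Vu2]^* = 0]. The
    direct estimator therefore pays the extra amount
    [-2 |S R|^-2 Re (G^* E[Vy Vu^*])], which is positive by hypothesis. *)

Section real_expectation.
Context d (T : measurableType d) (R : realType) (P : probability T R).
Implicit Types (f g : T -> R) (k : R).

Lemma Lfun2_Lfun1 f : f \in Lfun P 2%:E -> f \in Lfun P 1.
Proof. by apply: Lfun_subset12; exact: fin_num_measure. Qed.

Lemma Lfun2_sqr_Lfun1 f : f \in Lfun P 2%:E -> (fun t => f t ^+ 2) \in Lfun P 1.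
Proof. by move=> f2; apply/Lfun1_integrable; exact: Lfun2_integrable_sqr. Qed.

Lemma fine_expectationD f g : f \in Lfun P 1 -> g \in Lfun P 1 ->
  fine 'E_P[f \+ g] = fine 'E_P[f] + fine 'E_P[g].
Proof. by move=> f1 g1; rewrite expectationD// fineD// expectation_fin_num. Qed.

Lemma fine_expectationB f g : f \in Lfun P 1 -> g \in Lfun P 1 ->
  fine 'E_P[f \- g] = fine 'E_P[f] - fine 'E_P[g].
Proof. by move=> f1 g1; rewrite expectationB// fineB// expectation_fin_num. Qed.

Lemma fine_expectationZl k f : f \in Lfun P 1 ->
  fine 'E_P[k \o* f] = k * fine 'E_P[f].
Proof. by move=> f1; rewrite expectationZl// fineM// expectation_fin_num. Qed.

Lemma expectationM_indep f g :
    measurable_fun setT f -> measurable_fun setT g ->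
    (forall A B, measurable A -> measurable B ->
       P (f @^-1` A `&` g @^-1` B) = (P (f @^-1` A) * P (g @^-1` B))%E) ->
    f \in Lfun P 1 -> g \in Lfun P 1 -> f \* g \in Lfun P 1 ->
  ('E_P[f \* g] = 'E_P[f] * 'E_P[g])%E.
Proof.
move=> mf mg fg /Lfun1_integrable f1 /Lfun1_integrable g1 /Lfun1_integrable fg1.
pose fp : {mfun T >-> R} := HB.pack f (isMeasurableFun.Build _ _ _ _ _ mf).
pose gp : {mfun T >-> R} := HB.pack g (isMeasurableFun.Build _ _ _ _ _ mg).
have mfg : measurable_fun setT (fun t => (f t, g t)) by exact: measurable_fun_pair.
pose fgp : {mfun T >-> (R * R)%type} :=
  HB.pack (fun t => (f t, g t)) (isMeasurableFun.Build _ _ _ _ _ mfg).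
pose mu1 := distribution P fp; pose mu2 := distribution P gp.
pose mu := distribution P fgp.
have joint_law : forall W, measurable W -> (mu1 \x mu2)%E W = mu W.
  apply: product_measure_unique => A B mA mB.
  by rewrite /mu /mu1 /mu2 /distribution /pushforward /= -fg.
pose F := fun z : (R * R)%type => (z.1 * z.2)%:E.
have mF : measurable_fun setT F.
  by apply/measurable_EFinP; apply: measurable_funM;
    [exact: measurable_fst|exact: measurable_snd].
have iF : mu.-integrable setT F by exact: integrable_pushforward.
have iFprod : (mu1 \x mu2)%E.-integrable setT F.
  apply/integrableP; split => //.
  rewrite (eq_measure_integral mu); last by move=> A mA _; exact: joint_law.
  by case/integrableP: iF.
have id1 : mu1.-integrable setT EFin by exact: integrable_pushforward.
have id2 : mu2.-integrable setT EFin by exact: integrable_pushforward.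
have -> : ('E_P[f \* g] = \int[mu]_z F z)%E.
  by rewrite unlock integral_pushforward // preimage_setT.
have -> : ('E_P[f] = \int[mu1]_x x%:E)%E.
  by rewrite unlock integral_pushforward // preimage_setT.
have -> : ('E_P[g] = \int[mu2]_y y%:E)%E.
  by rewrite unlock integral_pushforward // preimage_setT.
rewrite (eq_measure_integral (mu1 \x mu2)%E); last first.
  by move=> A mA _; exact/esym/joint_law.
rewrite -(integral12_prod_meas1 iFprod) /fubini_F.
have /fineK <- := integrable_fin_num measurableT id2.
rewrite -integralZr //; apply: eq_integral => x _.
rewrite /F /=; under eq_integral do rewrite EFinM.
by rewrite integralZl // fineK // integrable_fin_num.
Qed.

End real_expectation.

Lemma expectation_comp_same_law d d' (T : measurableType d) (T' : measurableType d')
    (R : realType) (P : probability T R) (X Y : T -> T') (h : T' -> R) :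
    measurable_fun setT X -> measurable_fun setT Y ->
    (forall A, measurable A -> P (X @^-1` A) = P (Y @^-1` A)) ->
    measurable_fun setT h -> (forall x, 0 <= h x) ->
  ('E_P[h \o X] = 'E_P[h \o Y])%E.
Proof.
move=> mX mY law mh h0.
pose Xp : {mfun T >-> T'} := HB.pack X (isMeasurableFun.Build _ _ _ _ _ mX).
pose Yp : {mfun T >-> T'} := HB.pack Y (isMeasurableFun.Build _ _ _ _ _ mY).
have mhE : measurable_fun setT (EFin \o h) by exact/measurable_EFinP.
rewrite unlock.
rewrite -[LHS](@ge0_integral_distribution _ _ _ _ _ _ Xp (EFin \o h)) //.
rewrite -[RHS](@ge0_integral_distribution _ _ _ _ _ _ Yp (EFin \o h)) //.
by apply: eq_measure_integral => A mA _; exact: law.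
Qed.

Definition csqnorm {R : realType} (z : R[i]) : R :=
  complex.Re z ^+ 2 + complex.Im z ^+ 2.

Section csqnorm.
Context {R : realType}.
Implicit Types (a b c y z : R[i]).

Lemma csqnorm_gt0 z : z != 0 -> 0 < csqnorm z.
Proof.
case: z => a b nz; rewrite /csqnorm /= lt_neqAle addr_ge0 ?sqr_ge0 // andbT eq_sym.
by apply: contra nz; rewrite paddr_eq0 ?sqr_ge0 // !sqrf_eq0 => /andP[/eqP-> /eqP->].
Qed.

Lemma csqnormM a b : csqnorm (a * b) = csqnorm a * csqnorm b.
Proof. by case: a => a1 a2; case: b => b1 b2; rewrite /csqnorm /=; ring. Qed.

Lemma csqnormB_mul z c y :
  csqnorm (z - c * y) =
  csqnorm z + csqnorm c * csqnorm y - 2 * complex.Re (c^* * (z * y^*)).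
Proof.
by case: z => z1 z2; case: c => c1 c2; case: y => y1 y2; rewrite /csqnorm /=; ring.
Qed.

End csqnorm.

Section complex_random_variable.
Context {R : realType} {d : measure_display} {T : measurableType d}.
Variable P : probability T R.
Implicit Types X Y : T -> R[i].

Definition cintegrable X := cre X \in Lfun P 1 /\ cim X \in Lfun P 1.

Lemma finite_var_measurable X : finite_var P X -> measurable_fun setT (cpair X).
Proof.
case=> Xr Xi; apply: measurable_fun_pair.
- by move: Xr; rewrite inE => /andP[]; rewrite inE.
- by move: Xi; rewrite inE => /andP[]; rewrite inE.
Qed.

Lemma csqnorm_Lfun1 X : finite_var P X -> (fun t => csqnorm (X t)) \in Lfun P 1.
Proof. by case=> Xr Xi; rewrite rpredD // Lfun2_sqr_Lfun1. Qed.

Lemma cre_mul_conj X Y :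
  cre (fun t => X t * (Y t)^*) = cre X \* cre Y \+ cim X \* cim Y.
Proof.
apply/funext => t; rewrite /cre /cim /=.
by case: (X t) => a b; case: (Y t) => c e /=; ring.
Qed.

Lemma cim_mul_conj X Y :
  cim (fun t => X t * (Y t)^*) = cim X \* cre Y \- cre X \* cim Y.
Proof.
apply/funext => t; rewrite /cre /cim /=.
by case: (X t) => a b; case: (Y t) => c e /=; ring.
Qed.

Lemma cintegrable_mul_conj X Y : finite_var P X -> finite_var P Y ->
  cintegrable (fun t => X t * (Y t)^*).
Proof.
case=> Xr Xi [Yr Yi]; rewrite /cintegrable cre_mul_conj cim_mul_conj.
by split; rewrite ?rpredD ?rpredB ?rpredN //;
  [exact: (Lfun2_mul_Lfun1 Xr Yr)|exact: (Lfun2_mul_Lfun1 Xi Yi)|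
   exact: (Lfun2_mul_Lfun1 Xi Yr)|exact: (Lfun2_mul_Lfun1 Xr Yi)].
Qed.

Lemma Re_mul_fun c X :
  (fun t => complex.Re (c * X t)) =
  (complex.Re c \o* cre X) \- (complex.Im c \o* cim X).
Proof.
apply/funext => t; rewrite /cre /cim /=.
by case: c => a b; case: (X t) => x y /=; ring.
Qed.

Lemma cintegrable_Re_mul c X : cintegrable X ->
  (fun t => complex.Re (c * X t)) \in Lfun P 1.
Proof. by case=> Xr Xi; rewrite Re_mul_fun rpredB ?Lfun_scale. Qed.

Lemma fine_expectation_Re_mul c X : cintegrable X ->
  fine 'E_P[fun t => complex.Re (c * X t)] = complex.Re (c * cexpect P X).
Proof.
case=> Xr Xi; rewrite Re_mul_fun fine_expectationB ?Lfun_scale //.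
by rewrite (fine_expectationZl _ Xr) (fine_expectationZl _ Xi); case: c.
Qed.

Lemma second_moment_Zlim (G S Rr : R[i]) X Y : finite_var P X -> finite_var P Y ->
  second_moment P (Zlim G S Rr X Y) =
  (csqnorm (S * Rr)^-1 *
    (fine (second_moment P X) + csqnorm G * fine (second_moment P Y)
     - 2 * complex.Re (G^* * cexpect P (fun t => X t * (Y t)^*))))%:E.
Proof.
move=> fX fY; have XYc := cintegrable_mul_conj fX fY.
have sm Z : second_moment P Z = ('E_P[fun t => csqnorm (Z t)])%E by [].
rewrite !sm -(fine_expectation_Re_mul _ XYc).
have -> : (fun t => csqnorm (Zlim G S Rr X Y t)) =
    csqnorm (S * Rr)^-1 \o* ((fun t => csqnorm (X t)) \+
      csqnorm G \o* (fun t => csqnorm (Y t)) \-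
      2 \o* (fun t => complex.Re (G^* * (X t * (Y t)^*)))).
  by apply/funext => t; rewrite /Zlim csqnormM csqnormB_mul /=; ring.
move: (csqnorm_Lfun1 fX) (csqnorm_Lfun1 fY) (cintegrable_Re_mul G^* XYc).
move: (fun t => csqnorm (X t)) (fun t => csqnorm (Y t)) => a b.
move: (fun t => complex.Re (G^* * (X t * (Y t)^*))) => h a1 b1 h1.
rewrite -[LHS]fineK ?expectation_fin_num ?Lfun_scale ?rpredB ?rpredD ?Lfun_scale //.
rewrite fine_expectationZl ?rpredB ?rpredD ?Lfun_scale //.
rewrite fine_expectationB ?rpredD ?Lfun_scale // fine_expectationD ?Lfun_scale //.
by rewrite !fine_expectationZl.
Qed.

Lemma second_moment_same_distribution X Y : finite_var P X -> finite_var P Y ->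
  same_distribution P X Y -> second_moment P X = second_moment P Y.
Proof.
move=> fX fY law.
have msq : measurable_fun setT (fun z : R * R => z.1 ^+ 2 + z.2 ^+ 2).
  by apply: measurable_funD; apply: measurable_funX;
    [exact: measurable_fst|exact: measurable_snd].
apply: (expectation_comp_same_law (finite_var_measurable fX)
  (finite_var_measurable fY) law msq).
by move=> z; rewrite addr_ge0 ?sqr_ge0.
Qed.

Lemma cindependent_comp X Y (phi psi : R * R -> R) :
    measurable_fun setT phi -> measurable_fun setT psi -> cindependent P X Y ->
  forall A B, measurable A -> measurable B ->
    P ((phi \o cpair X) @^-1` A `&` (psi \o cpair Y) @^-1` B) =
    (P ((phi \o cpair X) @^-1` A) * P ((psi \o cpair Y) @^-1` B))%E.
Proof.
move=> mphi mpsi XY A B mA mB.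
apply: (XY (phi @^-1` A) (psi @^-1` B)); rewrite -[X in measurable X]setTI.
- exact: mphi.
- exact: mpsi.
Qed.

Lemma cexpect_mul_conj_indep X Y : finite_var P X -> finite_var P Y ->
    cindependent P X Y ->
  cexpect P (fun t => X t * (Y t)^*) = cexpect P X * (cexpect P Y)^*.
Proof.
move=> fX fY XY.
have EM (phi psi : R * R -> R) :
    measurable_fun setT phi -> measurable_fun setT psi ->
    phi \o cpair X \in Lfun P 2%:E -> psi \o cpair Y \in Lfun P 2%:E ->
    fine 'E_P[(phi \o cpair X) \* (psi \o cpair Y)] =
    fine 'E_P[phi \o cpair X] * fine 'E_P[psi \o cpair Y].
  move=> mphi mpsi /[dup] /Lfun2_Lfun1 phi1 phi2 /[dup] /Lfun2_Lfun1 psi1 psi2.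
  rewrite expectationM_indep ?fineM ?expectation_fin_num //.
  - exact: measurableT_comp (finite_var_measurable fX).
  - exact: measurableT_comp (finite_var_measurable fY).
  - exact: cindependent_comp.
  - exact: Lfun2_mul_Lfun1.
case: (fX) (fY) => Xr Xi [Yr Yi].
have [mfst msnd] := (@measurable_fst _ _ R R, @measurable_snd _ _ R R).
rewrite /cexpect cre_mul_conj cim_mul_conj.
rewrite fine_expectationD ?fine_expectationB; try exact: Lfun2_mul_Lfun1.
rewrite (EM fst fst) ?(EM snd snd) ?(EM snd fst) ?(EM fst snd) //=.
by congr Complex; ring.
Qed.

End complex_random_variable.

Theorem theorem1 (R : realType) (d : measure_display) (T : measurableType d)
    (P : probability T R) (G S Rr : R[i])
    (Vy Vu Vy1 Vu2 : T -> R[i]) :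
  S * Rr != 0 ->
  finite_var P Vy -> finite_var P Vu ->
  zero_mean P Vy -> zero_mean P Vu ->
  finite_var P Vy1 -> finite_var P Vu2 ->
  zero_mean P Vy1 -> zero_mean P Vu2 ->
  same_distribution P Vy1 Vy -> same_distribution P Vu2 Vu ->
  cindependent P Vy1 Vu2 ->
  complex.Re ((G^*)%C * cexpect P (fun t => Vy t * (Vu t)^*)%C) < 0 ->
  (second_moment P (Zlim G S Rr Vy1 Vu2) < second_moment P (Zlim G S Rr Vy Vu))%E.
Proof.
move=> SR0 fy fu _ _ fy1 fu2 _ [Eu2r Eu2i] lawy lawu indep neg.
rewrite !second_moment_Zlim // (second_moment_same_distribution fy1 fy lawy).
rewrite (second_moment_same_distribution fu2 fu lawu) cexpect_mul_conj_indep //.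
have -> : cexpect P Vu2 = 0 by rewrite /cexpect Eu2r Eu2i.
rewrite lte_fin ltr_pM2l ?csqnorm_gt0 ?invr_eq0 //.
(* [neg] is stated with [conjc G], the goal with [Num.conj G]: they are convertible. *)
by rewrite conjC0 !mulr0 /=; lra.
Qed.
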